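(* Let $p_1,p_2\in(0,1]$, $c_1,c_2\ge0$, $\beta<1$, $\delta_1,\delta_2\in(0,1)$. Define $R=\frac12$, $T_i=p_i+(1-p_i)\frac12-c_i$ for $i=1,2$, $S_1=(1-p_2)\frac12$, $S_2=(1-p_1)\frac12$, $Q_1=p_1p_2\frac12\beta+p_1(1-p_2)+(1-p_1)(1-p_2)\frac12-c_1$, $Q_2=p_1p_2\frac12\beta+p_2(1-p_1)+(1-p_1)(1-p_2)\frac12-c_2$. (Grim Trigger) $\frac{R}{1-\delta_i}\ge T_i+\frac{\delta_iQ_i}{1-\delta_i}$ for both $i=1,2$ if and only if \[\delta_1\ge\frac{p_1-2c_1}{(1-\beta)p_1p_2+p_2}\quad\text{and}\quad\delta_2\ge\frac{p_2-2c_2}{(1-\beta)p_1p_2+p_1}.\] (Tit-for-Tat) $\frac{R}{1-\delta_i}\ge T_i+\delta_iS_i+\frac{\delta_i^2}{1-\delta_i}R$ for both $i=1,2$ if and only if \[\delta_1\ge\frac{p_1-2c_1}{p_2}\quad\text{and}\quad\delta_2\ge\frac{p_2-2c_2}{p_1}.\]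
   Context: Model: two content providers in an infinitely repeated game choose each period to cooperate or attack (ranking manipulation). Player $i$'s attack succeeds with probability $p_i$ and costs $c_i$; $\beta$ is the market degradation factor when both attacks succeed; $\delta_i$ is player $i$'s discount factor. $R,T_i,S_i,Q_i$ are player $i$'s stage payoffs for mutual cooperation, lone attack, being attacked while cooperating, and mutual attack. Cooperation is sustainable when each player weakly prefers perpetual cooperation to deviating under the trigger strategy (grim trigger: permanent mutual defection after a deviation; Tit-for-Tat: one round of retaliation then cooperation). *)

From Stdlib Require Import Reals Lra.
Open Scope R_scope.

Definition Rpay : R := 1/2.
Definition T1 (p1 c1 : R) : R := p1 + (1 - p1) * (1/2) - c1.
Definition T2 (p2 c2 : R) : R := p2 + (1 - p2) * (1/2) - c2.
Definition S1 (p2 : R) : R := (1 - p2) * (1/2).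
Definition S2 (p1 : R) : R := (1 - p1) * (1/2).
Definition Q1 (p1 p2 beta c1 : R) : R :=
  p1 * p2 * (1/2) * beta + p1 * (1 - p2) + (1 - p1) * (1 - p2) * (1/2) - c1.
Definition Q2 (p1 p2 beta c2 : R) : R :=
  p1 * p2 * (1/2) * beta + p2 * (1 - p1) + (1 - p1) * (1 - p2) * (1/2) - c2.

Definition grim_ok (d T Q : R) : Prop :=
  Rpay / (1 - d) >= T + d * Q / (1 - d).
Definition tft_ok (d T S : R) : Prop :=
  Rpay / (1 - d) >= T + d * S + d ^ 2 / (1 - d) * Rpay.

(** Both trigger conditions are linear in the discount factor once cleared of
    the factor [1 - d]: cooperation is sustainable iff the discounted loss
    [d (T - Q)] (grim trigger), resp. [d (R - S)] (Tit-for-Tat), caused by the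
    punishment outweighs the one-shot gain [T - R] of the deviation. *)

From Stdlib Require Import Reals Lra.
From Coquelicot Require Import Rcomplements.
Open Scope R_scope.

Lemma Rge_div_iff (x a b : R) : 0 < b -> (x >= a / b <-> a <= x * b).
Proof.
  intros Hb; split; intros H.
  - apply Rle_div_l; lra.
  - apply Rle_ge, Rle_div_l; lra.
Qed.

Lemma grim_ok_iff (d T Q : R) : d < 1 -> 0 < T - Q ->
  (grim_ok d T Q <-> d >= (T - Rpay) / (T - Q)).
Proof.
  intros Hd HTQ; unfold grim_ok.
  rewrite Rge_div_iff by exact HTQ.
  assert (Hclear : (T + d * Q / (1 - d)) * (1 - d) = T * (1 - d) + d * Q)
    by (field; lra).
  split; intros H.
  - apply Rge_le, Rle_div_r in H; lra.
  - apply Rle_ge, Rle_div_r; lra.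
Qed.

Lemma tft_ok_iff (d T S : R) : d < 1 -> 0 < Rpay - S ->
  (tft_ok d T S <-> d >= (T - Rpay) / (Rpay - S)).
Proof.
  intros Hd HRS; unfold tft_ok.
  rewrite Rge_div_iff by exact HRS.
  (* the geometric tail of cooperation after the punishment round cancels *)
  assert (Hgap : Rpay / (1 - d) - (T + d * S + d ^ 2 / (1 - d) * Rpay)
                 = d * (Rpay - S) - (T - Rpay))
    by (unfold Rpay; field; lra).
  lra.
Qed.

Lemma Rdiv_half_half (a b : R) : (a / 2) / (b / 2) = a / b.
Proof. unfold Rdiv; apply Rdiv_mult_r_r; lra. Qed.

Lemma T1_sub_Rpay (p c : R) : T1 p c - Rpay = (p - 2 * c) / 2.
Proof. unfold T1, Rpay; field. Qed.

Lemma T1_sub_Q1 (p1 p2 beta c : R) :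
  T1 p1 c - Q1 p1 p2 beta c = ((1 - beta) * p1 * p2 + p2) / 2.
Proof. unfold T1, Q1; field. Qed.

Lemma Rpay_sub_S1 (p : R) : Rpay - S1 p = p / 2.
Proof. unfold Rpay, S1; field. Qed.

Lemma Q2_swap (p1 p2 beta c : R) : Q2 p1 p2 beta c = Q1 p2 p1 beta c.
Proof. unfold Q1, Q2; ring. Qed.

Lemma grim_ok_player1_iff (p1 p2 beta c d : R) :
  0 <= p1 -> 0 < p2 -> beta < 1 -> d < 1 ->
  (grim_ok d (T1 p1 c) (Q1 p1 p2 beta c)
   <-> d >= (p1 - 2 * c) / ((1 - beta) * p1 * p2 + p2)).
Proof.
  intros Hp1 Hp2 Hbeta Hd.
  assert (Hloss : 0 < T1 p1 c - Q1 p1 p2 beta c).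
  { rewrite T1_sub_Q1.
    assert (0 <= (1 - beta) * p1) by (apply Rmult_le_pos; lra).
    assert (0 <= (1 - beta) * p1 * p2) by (apply Rmult_le_pos; lra).
    lra. }
  rewrite grim_ok_iff by assumption.
  now rewrite T1_sub_Rpay, T1_sub_Q1, Rdiv_half_half.
Qed.

Lemma grim_ok_player2_iff (p1 p2 beta c d : R) :
  0 < p1 -> 0 <= p2 -> beta < 1 -> d < 1 ->
  (grim_ok d (T2 p2 c) (Q2 p1 p2 beta c)
   <-> d >= (p2 - 2 * c) / ((1 - beta) * p1 * p2 + p1)).
Proof.
  intros Hp1 Hp2 Hbeta Hd.
  rewrite Q2_swap.
  replace ((1 - beta) * p1 * p2) with ((1 - beta) * p2 * p1) by ring.
  exact (grim_ok_player1_iff p2 p1 beta c d Hp2 Hp1 Hbeta Hd).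
Qed.

Lemma tft_ok_player1_iff (p1 p2 c d : R) : 0 < p2 -> d < 1 ->
  (tft_ok d (T1 p1 c) (S1 p2) <-> d >= (p1 - 2 * c) / p2).
Proof.
  intros Hp2 Hd.
  rewrite tft_ok_iff by (rewrite ?Rpay_sub_S1; lra).
  now rewrite T1_sub_Rpay, Rpay_sub_S1, Rdiv_half_half.
Qed.

Theorem theorem10 (p1 p2 c1 c2 beta d1 d2 : R)
  (hp1 : 0 < p1 <= 1) (hp2 : 0 < p2 <= 1)
  (hc1 : 0 <= c1) (hc2 : 0 <= c2) (hbeta : beta < 1)
  (hd1 : 0 < d1 < 1) (hd2 : 0 < d2 < 1) :
  ((grim_ok d1 (T1 p1 c1) (Q1 p1 p2 beta c1) /\
    grim_ok d2 (T2 p2 c2) (Q2 p1 p2 beta c2)) <->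
   (d1 >= (p1 - 2 * c1) / ((1 - beta) * p1 * p2 + p2) /\
    d2 >= (p2 - 2 * c2) / ((1 - beta) * p1 * p2 + p1)))
  /\
  ((tft_ok d1 (T1 p1 c1) (S1 p2) /\ tft_ok d2 (T2 p2 c2) (S2 p1)) <->
   (d1 >= (p1 - 2 * c1) / p2 /\ d2 >= (p2 - 2 * c2) / p1)).
Proof.
  rewrite grim_ok_player1_iff, grim_ok_player2_iff by lra.
  change (T2 p2 c2) with (T1 p2 c2); change (S2 p1) with (S1 p1).
  rewrite !tft_ok_player1_iff by lra.
  split; reflexivity.
Qed.
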